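(* For $m,n\ge2$, \[ \sum_{k=2}^m\sum_{l=2}^n k!\left\{{m\atop k}\right\}\, l!\left\{{n\atop l}\right\}\,G_{k,l}=1-\frac{m!\,n!}{(m+n-1)!}. \]
   Context: The generalized Gregory coefficients $G_{m,n}$ are defined by $\sum_{m,n\ge0}G_{m,n}x^my^n=\dfrac{y\log^2(1+x)-x\log^2(1+y)}{\log(1+x)-\log(1+y)}$ (formal power series; $\log^ku=(\log u)^k$). $\left\{{n\atop m}\right\}$ are the Stirling numbers of the second kind: $\left\{{n+1\atop m}\right\}=\left\{{n\atop m-1}\right\}+m\left\{{n\atop m}\right\}$, $\left\{{0\atop 0}\right\}=1$, $\left\{{n\atop 0}\right\}=\left\{{0\atop m}\right\}=0$ for $n,m\ne0$. *)

From mathcomp Require Import all_boot all_order all_algebra.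
Set Implicit Arguments. Unset Strict Implicit. Unset Printing Implicit Defensive.
Import Order.TTheory GRing.Theory Num.Theory.
Local Open Scope ring_scope.

Fixpoint stirling2 (n m : nat) : nat :=
  match n, m with
  | 0, 0 => 1
  | 0, _.+1 => 0
  | _.+1, 0 => 0
  | n'.+1, m'.+1 => stirling2 n' m' + m'.+1 * stirling2 n' m'.+1
  end%N.

(* Bivariate formal power series over Q are represented by their coefficient
   functions  nat -> nat -> rat  (coefficient of x^i y^j). *)
Definition fps2 := nat -> nat -> rat.

Definition fps2_mul (A B : fps2) : fps2 := fun m n =>
  \sum_(i < m.+1) \sum_(j < n.+1) A i j * B (m - i)%N (n - j)%N.

(* Coefficients of log(1+x) = sum_{i>=1} (-1)^(i+1) x^i / i. *)
Definition logc (i : nat) : rat :=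
  if i is 0 then 0 else (-1) ^+ i.+1 / i%:R.

Definition log2c (i : nat) : rat :=
  \sum_(j < i.+1) logc j * logc (i - j)%N.

(* Denominator  log(1+x) - log(1+y). *)
Definition gden : fps2 := fun i j =>
  (if j == 0%N then logc i else 0) - (if i == 0%N then logc j else 0).

(* Numerator  y log^2(1+x) - x log^2(1+y). *)
Definition gnum : fps2 := fun i j =>
  (if j == 1%N then log2c i else 0) - (if i == 1%N then log2c j else 0).

(* G is the coefficient family of the formal power series
   (y log^2(1+x) - x log^2(1+y)) / (log(1+x) - log(1+y)), i.e. the unique
   (Q[[x,y]] is an integral domain) series with  gden * G = gnum. *)
Definition is_gen_gregory (G : fps2) : Prop :=
  forall m n : nat, fps2_mul gden G m n = gnum m n.

From mathcomp Require Import all_boot all_order all_algebra.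
From mathcomp Require Import ring zify.
Import Order.TTheory GRing.Theory Num.Theory.
Local Open Scope ring_scope.

(* For f : nat -> rat put psi_m f = sum_k k! S(m,k) f_k = m! [t^m] f(e^t - 1).
   The substitution X = e^t - 1 turns log(1 + X) into t, hence
   psi_m (log(1 + X) f) = m psi_(m-1) f.  Applying psi_m (x) psi_n to
   (log(1 + x) - log(1 + y)) G = y log^2(1 + x) - x log^2(1 + y) thus gives
   F(m,n) := (psi_m (x) psi_n) G the recurrence
     m F(m-1,n) - n F(m,n-1) = 2 [m = 2][n > 0] - 2 [m > 0][n = 2],
   solved by F(m,n) = - m! n! / (m+n-1)! for m, n >= 2, F(1,1) = 1 and
   F(m,n) = 0 otherwise.  The sum of the theorem is F(m,n) without its terms
   with k = 1 or l = 1, i.e. F(m,n) - F(m,1) - F(1,n) + F(1,1). *)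

Definition nsurj (m k : nat) : rat := ((k`! * stirling2 m k)%N)%:R.

Lemma stirling2_eq0 m k : (m < k)%N -> stirling2 m k = 0%N.
Proof. by elim: m k => [|m IH] [|k] //= ltmk; rewrite !IH //; lia. Qed.

Lemma nsurj_eq0 m k : (m < k)%N -> nsurj m k = 0.
Proof. by move=> ltmk; rewrite /nsurj stirling2_eq0 ?muln0. Qed.

Lemma nsurj_n0 m : nsurj m 0 = (m == 0%N)%:R.
Proof. by case: m. Qed.

Lemma nsurjSS m k : nsurj m.+1 k.+1 = k.+1%:R * (nsurj m k + nsurj m k.+1).
Proof. by rewrite /nsurj /= -natrD -natrM factS; congr _%:R; ring. Qed.

Lemma nsurj_n1 m : nsurj m 1 = (m != 0%N)%:R.
Proof.
elim: m => // m IH; rewrite nsurjSS nsurj_n0 IH mul1r.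
by case: m {IH} => [|m]; rewrite ?add0r ?addr0.
Qed.

(* psi_m of the header: (e^t - 1)^k / k! is the exponential generating
   function of the S(m,k). *)
Definition coef_expm1 (m : nat) (f : nat -> rat) : rat :=
  \sum_(k < m.+1) nsurj m k * f k.

Definition conv (f g : nat -> rat) (k : nat) : rat :=
  \sum_(i < k.+1) f i * g (k - i)%N.

(* The derivation (1 + X) d/dX, i.e. d/dt under X = e^t - 1. *)
Definition deriv1pX (f : nat -> rat) (k : nat) : rat :=
  k.+1%:R * f k.+1 + k%:R * f k.

Lemma eq_coef_expm1 {m f g} : f =1 g -> coef_expm1 m f = coef_expm1 m g.
Proof. by move=> eq_fg; apply: eq_bigr => k _; rewrite eq_fg. Qed.

Lemma coef_expm1D m f g :
  coef_expm1 m (fun k => f k + g k) = coef_expm1 m f + coef_expm1 m g.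
Proof. by rewrite -big_split; apply: eq_bigr => k _; rewrite mulrDr. Qed.

Lemma coef_expm1B m f g :
  coef_expm1 m (fun k => f k - g k) = coef_expm1 m f - coef_expm1 m g.
Proof. by rewrite -sumrB; apply: eq_bigr => k _; rewrite mulrBr. Qed.

Lemma coef_expm1Ml m c f : coef_expm1 m (fun k => c * f k) = c * coef_expm1 m f.
Proof. by rewrite mulr_sumr; apply: eq_bigr => k _; rewrite mulrCA. Qed.

Lemma exchange_coef_expm1 m n (F : nat -> nat -> rat) :
  coef_expm1 m (fun k => coef_expm1 n (F k))
  = coef_expm1 n (fun l => coef_expm1 m (F^~ l)).
Proof.
rewrite /coef_expm1; under eq_bigr do rewrite mulr_sumr.
rewrite exchange_big; apply: eq_bigr => l _.
rewrite mulr_sumr; apply: eq_bigr => k _; ring.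
Qed.

Lemma coef_expm1_delta m j : coef_expm1 m (fun k => (k == j)%:R) = nsurj m j.
Proof.
rewrite /coef_expm1; case: (ltnP j m.+1) => [ltjm | lemj].
  rewrite (bigD1 (Ordinal ltjm)) //= eqxx mulr1 big1 ?addr0 // => k /negbTE neq_kj.
  by rewrite -val_eqE /= in neq_kj; rewrite neq_kj mulr0.
rewrite nsurj_eq0 // big1 // => k _.
by rewrite ltn_eqF ?mulr0 // (leq_trans (ltn_ord k) lemj).
Qed.

Lemma coef_expm1_0 f : coef_expm1 0 f = f 0%N.
Proof. by rewrite /coef_expm1 big_ord1 mul1r. Qed.

Lemma coef_expm1_1 f : coef_expm1 1 f = f 1%N.
Proof. by rewrite /coef_expm1 !big_ord_recl big_ord0 /= mul0r add0r addr0 mul1r. Qed.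

Lemma coef_expm1S m f : coef_expm1 m.+1 f = coef_expm1 m (deriv1pX f).
Proof.
have shift : \sum_(k < m.+1) nsurj m k.+1 * (k.+1%:R * f k.+1)
             = \sum_(k < m.+1) nsurj m k * (k%:R * f k).
  transitivity (\sum_(k < m.+2) nsurj m k * (k%:R * f k)).
    by rewrite [RHS]big_ord_recl /= mul0r mulr0 add0r.
  by rewrite big_ord_recr /= nsurj_eq0 // mul0r addr0.
rewrite /coef_expm1 /deriv1pX big_ord_recl /= mul0r add0r.
under [RHS]eq_bigr do rewrite mulrDr.
rewrite big_split /= -shift -big_split.
by apply: eq_bigr => k _; rewrite /= nsurjSS; ring.
Qed.

Lemma deriv1pX_conv f g k :
  deriv1pX (conv f g) k = conv (deriv1pX f) g k + conv f (deriv1pX g) k.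
Proof.
have weight_succ : k.+1%:R * \sum_(i < k.+2) f i * g (k.+1 - i)%N
    = \sum_(i < k.+1) (i.+1%:R * f i.+1 * g (k - i)%N
                       + (k - i).+1%:R * f i * g (k - i).+1).
  transitivity (\sum_(i < k.+2) (i%:R * f i * g (k.+1 - i)%N
                                 + (k.+1 - i)%:R * f i * g (k.+1 - i)%N)).
    rewrite mulr_sumr; apply: eq_bigr => i _.
    rewrite -mulrDl -mulrDl -natrD subnKC; [ring | by rewrite -ltnS].
  rewrite big_split /= [X in X + _]big_ord_recl [X in _ + X]big_ord_recr /=.
  rewrite subnn !mul0r add0r addr0.
  rewrite -big_split; apply: eq_bigr => i _ /=.
  by rewrite subSS subSn // -ltnS.
have weight : k%:R * \sum_(i < k.+1) f i * g (k - i)%N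
    = \sum_(i < k.+1) (i%:R * f i * g (k - i)%N + (k - i)%:R * f i * g (k - i)%N).
  rewrite mulr_sumr; apply: eq_bigr => i _.
  rewrite -mulrDl -mulrDl -natrD subnKC; [ring | by rewrite -ltnS].
rewrite /deriv1pX /conv weight_succ weight -!big_split.
by apply: eq_bigr => i _ /=; ring.
Qed.

Lemma deriv1pX_logc k : deriv1pX logc k = (k == 0%N)%:R.
Proof.
rewrite /deriv1pX; case: k => [|k]; first by rewrite mulr0 addr0 mul1r.
rewrite /logc mulrCA mulfV ?pnatr_eq0 // mulrCA mulfV ?pnatr_eq0 //.
by rewrite /= !exprS; ring.
Qed.

Lemma deriv1pX_conv_logc g k :
  deriv1pX (conv logc g) k = g k + conv logc (deriv1pX g) k.
Proof.
rewrite deriv1pX_conv; congr (_ + _).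
rewrite /conv big_ord_recl deriv1pX_logc subn0 mul1r big1 ?addr0 // => i _.
by rewrite deriv1pX_logc mul0r.
Qed.

Lemma coef_expm1_logc_convS m g :
  coef_expm1 m.+1 (conv logc g) = m.+1%:R * coef_expm1 m g.
Proof.
elim: m g => [|m IH] g.
all: rewrite coef_expm1S (eq_coef_expm1 (deriv1pX_conv_logc g)) coef_expm1D.
  by rewrite !coef_expm1_0 /conv big_ord1 mul0r addr0 mul1r.
by rewrite IH -coef_expm1S mulrSr; ring.
Qed.

Lemma coef_expm1_logc_conv m g :
  coef_expm1 m (conv logc g) = m%:R * coef_expm1 m.-1 g.
Proof.
case: m => [|m]; last exact: coef_expm1_logc_convS.
by rewrite coef_expm1_0 /conv big_ord1 !mul0r.
Qed.

Lemma coef_expm1_logc m : coef_expm1 m logc = (m == 1%N)%:R.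
Proof.
case: m => [|m]; first by rewrite coef_expm1_0.
by rewrite coef_expm1S (eq_coef_expm1 deriv1pX_logc) coef_expm1_delta nsurj_n0.
Qed.

Lemma coef_expm1_log2c m : coef_expm1 m log2c = (m == 2%N)%:R *+ 2.
Proof.
rewrite (coef_expm1_logc_conv m logc) coef_expm1_logc.
by case: m => [|[|[|m]]]; rewrite ?mul0r ?mulr0 ?mulr1.
Qed.

Definition coef2_expm1 (m n : nat) (F : fps2) : rat :=
  coef_expm1 m (fun k => coef_expm1 n (F k)).

Lemma coef2_expm1B m n (F F' : fps2) :
  coef2_expm1 m n (fun i j => F i j - F' i j)
  = coef2_expm1 m n F - coef2_expm1 m n F'.
Proof.
rewrite /coef2_expm1 -coef_expm1B; apply: eq_coef_expm1 => k.
exact: coef_expm1B.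
Qed.

Lemma coef2_expm1_tensor m n (f g : nat -> rat) :
  coef2_expm1 m n (fun i j => f i * g j) = coef_expm1 m f * coef_expm1 n g.
Proof.
rewrite /coef2_expm1 (eq_coef_expm1 (fun k => coef_expm1Ml n (f k) g)).
by rewrite mulrC -coef_expm1Ml; apply: eq_coef_expm1 => k; rewrite mulrC.
Qed.

Lemma fps2_mul_gden (G : fps2) k l :
  fps2_mul gden G k l = conv logc (G^~ l) k - conv logc (G k) l.
Proof.
rewrite /fps2_mul /gden.
under eq_bigr do under eq_bigr do rewrite mulrBl.
under eq_bigr do rewrite sumrB.
rewrite sumrB; congr (_ - _).
  apply: eq_bigr => i _; rewrite big_ord_recl /= subn0 big1 ?addr0 // => j _.
  by rewrite mul0r.
rewrite big_ord_recl /= subn0 [X in _ + X]big1 ?addr0 // => i _.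
by rewrite big1 // => j _; rewrite mul0r.
Qed.

Lemma coef2_expm1_gden_mul (G : fps2) m n :
  coef2_expm1 m n (fps2_mul gden G)
  = m%:R * coef2_expm1 m.-1 n G - n%:R * coef2_expm1 m n.-1 G.
Proof.
transitivity (coef2_expm1 m n (fun k l => conv logc (G^~ l) k - conv logc (G k) l)).
  exact: eq_coef_expm1 (fun k => eq_coef_expm1 (fps2_mul_gden G k)).
rewrite coef2_expm1B /coef2_expm1; congr (_ - _).
  rewrite exchange_coef_expm1.
  under eq_coef_expm1 => l do rewrite coef_expm1_logc_conv.
  by rewrite coef_expm1Ml exchange_coef_expm1.
under eq_coef_expm1 => k do rewrite coef_expm1_logc_conv.
exact: coef_expm1Ml.
Qed.

Lemma coef2_expm1_gnum m n :
  coef2_expm1 m n gnum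
  = (m == 2%N)%:R *+ 2 * (n != 0%N)%:R - (m != 0%N)%:R * (n == 2%N)%:R *+ 2.
Proof.
transitivity (coef2_expm1 m n (fun i j => log2c i * (j == 1%N)%:R - (i == 1%N)%:R * log2c j)).
  apply: eq_coef_expm1 => i; apply: eq_coef_expm1 => j.
  by rewrite /gnum; case: eqP; case: eqP; rewrite ?mulr1 ?mul1r ?mulr0 ?mul0r.
rewrite coef2_expm1B !coef2_expm1_tensor !coef_expm1_delta !coef_expm1_log2c.
by rewrite !nsurj_n1; ring.
Qed.

Definition gregory_moment (m n : nat) : rat :=
  if (m == 1%N) && (n == 1%N) then 1
  else if (1 < m)%N && (1 < n)%N then - ((m`! * n`!)%N)%:R / ((m + n - 1)`!)%:R
  else 0.

Lemma natr_fact_neq0 k : (k`!)%:R != 0 :> rat.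
Proof. by rewrite pnatr_eq0 -lt0n fact_gt0. Qed.

Lemma gregory_momentS m n :
  m.+1%:R * gregory_moment m n.+1
  = n.+1%:R * gregory_moment m.+1 n + (m.+1 == 2%N)%:R *+ 2 - (n.+1 == 2%N)%:R *+ 2.
Proof.
rewrite /gregory_moment.
case: m => [|[|m]]; case: n => [|[|n]] /=; try (rewrite ?mulr0 ?mul0r; ring).
- have -> : (2 + n.+2 - 1 = n.+3)%N by lia.
  rewrite !factS !natrM.
  field; rewrite ?natr_fact_neq0 ?(addrC 1) ?natr1 -?natrD ?pnatr_eq0 //=.
- have -> : (m.+2 + 2 - 1 = m.+3)%N by lia.
  rewrite !factS !natrM.
  field; rewrite ?natr_fact_neq0 ?(addrC 1) ?natr1 -?natrD ?pnatr_eq0 //=.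
- have -> : (m.+2 + n.+3 - 1 = (m + n).+4)%N by lia.
  have -> : (m.+3 + n.+2 - 1 = (m + n).+4)%N by lia.
  rewrite !factS !natrM; ring.
Qed.

Lemma coef_expm1_tail m f :
  coef_expm1 m.+1 f = f 1%N + \sum_(2 <= k < m.+2) nsurj m.+1 k * f k.
Proof.
rewrite /coef_expm1 -(big_mkord xpredT (fun k => nsurj m.+1 k * f k)).
by rewrite big_ltn // big_ltn // nsurj_n0 nsurj_n1 mul0r add0r mul1r.
Qed.

Lemma coef2_expm1_tails (F : fps2) m n :
  \sum_(2 <= k < m.+2) \sum_(2 <= l < n.+2) nsurj m.+1 k * nsurj n.+1 l * F k l
  = coef2_expm1 m.+1 n.+1 F - coef2_expm1 m.+1 1 F
    - (coef2_expm1 1 n.+1 F - coef2_expm1 1 1 F).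
Proof.
set T := fun f : nat -> rat => \sum_(2 <= l < n.+2) nsurj n.+1 l * f l.
have row k : coef_expm1 n.+1 (F k) = F k 1%N + T (F k) := coef_expm1_tail n (F k).
have col1 : coef_expm1 m.+1 (fun k => coef_expm1 1 (F k)) = coef_expm1 m.+1 (F^~ 1%N).
  exact: eq_coef_expm1 (fun k => coef_expm1_1 (F k)).
rewrite /coef2_expm1 (eq_coef_expm1 row) coef_expm1D col1 !coef_expm1_1 row.
rewrite (coef_expm1_tail m (fun k => T (F k))).
suff -> : \sum_(2 <= k < m.+2) nsurj m.+1 k * T (F k)
  = \sum_(2 <= k < m.+2) \sum_(2 <= l < n.+2) nsurj m.+1 k * nsurj n.+1 l * F k l by ring.
by apply: eq_bigr => k _; rewrite mulr_sumr; apply: eq_bigr => l _; rewrite mulrA.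
Qed.

Section GregoryMoments.

Variable G : fps2.
Hypothesis HG : is_gen_gregory G.

Lemma coef2_expm1_gregory_rec m n :
  m%:R * coef2_expm1 m.-1 n G - n%:R * coef2_expm1 m n.-1 G
  = (m == 2%N)%:R *+ 2 * (n != 0%N)%:R - (m != 0%N)%:R * (n == 2%N)%:R *+ 2.
Proof.
rewrite -coef2_expm1_gden_mul -coef2_expm1_gnum.
by apply: eq_coef_expm1 => k; apply: eq_coef_expm1 => l; apply: HG.
Qed.

Lemma coef2_expm1_gregory m n : coef2_expm1 m n G = gregory_moment m n.
Proof.
elim: n m => [|n IH] m.
  have := coef2_expm1_gregory_rec m.+1 0.
  rewrite /= !(mulr0n, mul0r, mulr0, mul0rn, subr0) => /eqP.
  rewrite mulf_eq0 pnatr_eq0 /= => /eqP ->.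
  by rewrite /gregory_moment !andbF.
have := coef2_expm1_gregory_rec m.+1 n.+1; rewrite /= IH mulr1 mul1r => rec.
apply: (@mulfI _ m.+1%:R); first by rewrite pnatr_eq0.
by rewrite gregory_momentS -addrA -rec; ring.
Qed.

End GregoryMoments.

Theorem theorem5p5 (G : nat -> nat -> rat) (HG : is_gen_gregory G)
    (m n : nat) (hm : (2 <= m)%N) (hn : (2 <= n)%N) :
  \sum_(2 <= k < m.+1) \sum_(2 <= l < n.+1)
      ((k`! * stirling2 m k)%N)%:R * ((l`! * stirling2 n l)%N)%:R * G k l
  = 1 - ((m`! * n`!)%N)%:R / ((m + n - 1)`!)%:R.
Proof.
case: m hm => [|[|m]] // _; case: n hn => [|[|n]] // _.
rewrite (coef2_expm1_tails G m.+1 n.+1) !coef2_expm1_gregory //.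
by rewrite /gregory_moment /=; ring.
Qed.
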